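(* Let $(\overline{\mathbf{v}}^n,\overline{\boldsymbol{\rho}}^n)_{n\in\mathbb{N}}$ be a supersolution and $(\underline{\mathbf{v}}^n,\underline{\boldsymbol{\rho}}^n)_{n\in\mathbb{N}}$ a subsolution of the iterative scheme described in the context. Assume that $\underline{v}^0_j(t,x)\le\overline{v}^0_j(t,x)$ and $\underline{\rho}^0_j(t)\le\overline{\rho}^0_j(t)$ for all $t\ge0$, $x\in[0,1]$, $j\in\mathbb{Z}$, and that for all $n\ge1$, $\underline{v}^n_j(0,x)\le\overline{v}^n_j(0,x)$ and $\underline{\rho}^n_j(0)\le\overline{\rho}^n_j(0)$ for $x\in[0,1]$, $j\in\mathbb{Z}$. Then for all $t>0$, $n\ge1$, $j\in\mathbb{Z}$: $\underline{v}^n_j(t,x)\le\overline{v}^n_j(t,x)$ for $x\in[0,1]$ and $\underline{\rho}^n_j(t)\le\overline{\rho}^n_j(t)$.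
   Context: Fix $\alpha,\beta,d>0$ and $f\in\mathscr{C}^1([0,1])$ with $f(0)=f(1)=0$, $0<f(u)\le f'(0)u$ on $(0,1)$, extended to a locally Lipschitz function on $\mathbb{R}$ negative on $\mathbb{R}\setminus[0,1]$. Consider sequences indexed by $n\in\mathbb{N}$ of pairs $(\mathbf{v}^n,\boldsymbol{\rho}^n)=(v^n_j,\rho^n_j)_{j\in\mathbb{Z}}$, where for $n=0$ the $v^0_j$ are continuous functions on $[0,+\infty)\times[0,1]$ and $\rho^0_j$ continuous on $[0,+\infty)$, and for every $n\ge1$ and $j$: $\rho^n_j\in\mathscr{C}^1([0,+\infty))$, $v^n_j\in\mathscr{C}^0([0,+\infty)\times[0,1])$, $\partial_tv^n_j,\partial_x^2v^n_j\in\mathscr{C}^0((0,+\infty)\times(0,1))$, $\partial_xv^n_j\in\mathscr{C}^0((0,+\infty)\times[0,1])$. Such a sequence $(\overline{\mathbf{v}}^n,\overline{\boldsymbol{\rho}}^n)_n$ is a supersolution of the iterative scheme if for all $n\ge1$, $t>0$, $j\in\mathbb{Z}$: $\partial_t\overline{v}^n_j\ge d\,\partial_x^2\overline{v}^n_j$ on $(0,1)$; $(\overline{\rho}^n_j)'(t)\ge f(\overline{\rho}^n_j(t))+\alpha(\overline{v}^{n-1}_j(t,0)+\overline{v}^{n-1}_{j-1}(t,1))-2\beta\overline{\rho}^n_j(t)$; $-d\,\partial_x\overline{v}^n_j(t,0)+\alpha\overline{v}^n_j(t,0)\ge\beta\overline{\rho}^n_j(t)$; $d\,\partial_x\overline{v}^n_j(t,1)+\alpha\overline{v}^n_j(t,1)\ge\beta\overline{\rho}^n_{j+1}(t)$.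 A subsolution is defined with all these inequalities reversed. *)

From Stdlib Require Import Reals ZArith.
From Coquelicot Require Import Coquelicot.
Open Scope R_scope.

Definition C1_R (g : R -> R) : Prop :=
  (forall x, ex_derive g x) /\ (forall x, continuous (Derive g) x).

Definition cont_on1 (S : R -> Prop) (g : R -> R) : Prop :=
  forall t, S t -> filterlim g (within S (locally t)) (locally (g t)).

Definition cont_on2 (S : R -> R -> Prop) (g : R -> R -> R) : Prop :=
  forall t x, S t x ->
    filterlim (fun p : R * R => g (fst p) (snd p))
      (within (fun p : R * R => S (fst p) (snd p)) (locally (t, x)))
      (locally (g t x)).

Definition Q_closed (t x : R) : Prop := 0 <= t /\ 0 <= x <= 1.
Definition Q_open (t x : R) : Prop := 0 < t /\ 0 < x < 1.
Definition Q_side (t x : R) : Prop := 0 < t /\ 0 <= x <= 1.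

(* l is the x-derivative of v at (t,x) relative to [0,1]
   (two-sided at interior points, one-sided at x = 0 and x = 1). *)
Definition pdx_in01 (v : R -> R -> R) (t x l : R) : Prop :=
  filterlim (fun y => (v t y - v t x) / (y - x))
    (within (fun y => 0 <= y <= 1 /\ y <> x) (locally x)) (locally l).

(* Standing assumptions on f: f in C^1([0,1]) (i.e. f|[0,1] is the restriction
   of a C^1 function g on R; f'(0) := g'(0)), f(0)=f(1)=0,
   0 < f(u) <= f'(0) u on (0,1), f locally Lipschitz on R, f < 0 off [0,1]. *)
Definition KPP_f (f : R -> R) : Prop :=
  (exists g : R -> R, C1_R g /\ (forall u, 0 <= u <= 1 -> g u = f u) /\
      (forall u, 0 < u < 1 -> 0 < f u /\ f u <= Derive g 0 * u)) /\
  f 0 = 0 /\ f 1 = 0 /\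
  (forall a b, exists L, forall x y, a <= x <= b -> a <= y <= b ->
       Rabs (f x - f y) <= L * Rabs (x - y)) /\
  (forall u, (u < 0 \/ 1 < u) -> f u < 0).

(* Sequences: v n j t x = v^n_j(t,x), rho n j t = rho^n_j(t). *)
Definition vseq := nat -> Z -> R -> R -> R.
Definition rseq := nat -> Z -> R -> R.

(* Regularity at level n >= 1 of (v^n_j, rho^n_j), with the partial derivatives
   of v given by witnesses vt, vx, vxx. rho in C^1([0,+oo)) is expressed as
   "rho coincides on [0,+oo) with a C^1 function on R". *)
Definition regular_n (v : R -> R -> R) (rho : R -> R) (vt vx vxx : R -> R -> R) : Prop :=
  (exists G : R -> R, C1_R G /\ forall t, 0 <= t -> G t = rho t) /\
  cont_on2 Q_closed v /\
  (forall t x, Q_open t x ->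
     is_derive (fun s => v s x) t (vt t x) /\
     is_derive (fun y => vx t y) x (vxx t x)) /\
  (forall t x, Q_side t x -> pdx_in01 v t x (vx t x)) /\
  cont_on2 Q_open vt /\ cont_on2 Q_open vxx /\ cont_on2 Q_side vx.

Definition regular_0 (v : vseq) (rho : rseq) : Prop :=
  forall j, cont_on2 Q_closed (v 0%nat j) /\ cont_on1 (fun t => 0 <= t) (rho 0%nat j).

Definition supersolution (d alpha beta : R) (f : R -> R) (v : vseq) (rho : rseq) : Prop :=
  regular_0 v rho /\
  forall n : nat, (1 <= n)%nat -> forall j : Z,
  exists vt vx vxx : R -> R -> R,
    regular_n (v n j) (rho n j) vt vx vxx /\
    forall t, 0 < t ->
      (forall x, 0 < x < 1 -> vt t x >= d * vxx t x) /\
      Derive (rho n j) t >= f (rho n j t)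
          + alpha * (v (n - 1)%nat j t 0 + v (n - 1)%nat (j - 1)%Z t 1)
          - 2 * beta * rho n j t /\
      - d * vx t 0 + alpha * v n j t 0 >= beta * rho n j t /\
      d * vx t 1 + alpha * v n j t 1 >= beta * rho n (j + 1)%Z t.

Definition subsolution (d alpha beta : R) (f : R -> R) (v : vseq) (rho : rseq) : Prop :=
  regular_0 v rho /\
  forall n : nat, (1 <= n)%nat -> forall j : Z,
  exists vt vx vxx : R -> R -> R,
    regular_n (v n j) (rho n j) vt vx vxx /\
    forall t, 0 < t ->
      (forall x, 0 < x < 1 -> vt t x <= d * vxx t x) /\
      Derive (rho n j) t <= f (rho n j t)
          + alpha * (v (n - 1)%nat j t 0 + v (n - 1)%nat (j - 1)%Z t 1)
          - 2 * beta * rho n j t /\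
      - d * vx t 0 + alpha * v n j t 0 <= beta * rho n j t /\
      d * vx t 1 + alpha * v n j t 1 <= beta * rho n (j + 1)%Z t.

From Stdlib Require Import Reals ZArith Lra Lia Classical ClassicalEpsilon.
From Coquelicot Require Import Coquelicot.
Open Scope R_scope.

(* The scheme is triangular: rho^n_j is driven by v^(n-1) alone, and v^n_j by rho^n_j and
   rho^n_(j+1). By induction on n it therefore suffices to compare, level by level, sub- and
   supersolutions of a scalar ODE with locally Lipschitz nonlinearity, and of the heat
   equation on [0,1] with Robin boundary conditions (alpha > 0). Both comparisons use the
   first-touching argument: add a small growing barrier (eps e^(K s) for the ODE, eps (1 + s)
   for the heat equation) to the supersolution and look at the first time the difference
   reaches it. At that time and place the difference has a maximum, and the signs of its
   derivatives there contradict the differential inequalities or the boundary conditions. *)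

Lemma filterlim_Rminus {T : Type} {F : (T -> Prop) -> Prop} {FF : Filter F}
  (f g : T -> R) (a b : R) :
  filterlim f F (locally a) -> filterlim g F (locally b) ->
  filterlim (fun y => f y - g y) F (locally (a - b)).
Proof.
  intros Hf Hg.
  eapply (filterlim_comp_2 f (fun y => opp (g y)) plus Hf).
  - exact (filterlim_comp _ _ _ g opp F _ _ Hg (filterlim_opp b)).
  - exact (filterlim_plus a (opp b)).
Qed.

Lemma within_locally_le (x : R) (D E : R -> Prop) :
  (exists del : posreal, forall y, Rabs (y - x) < del -> D y -> E y) ->
  filter_le (within D (locally x)) (within E (locally x)).
Proof.
  intros [del Hdel] P [eps HP].
  exists (mkposreal _ (Rmin_pos _ _ (cond_pos del) (cond_pos eps))).
  intros y Hy Dy. apply HP.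
  - eapply Rlt_le_trans; [exact Hy | apply Rmin_r].
  - apply Hdel; [|exact Dy].
    eapply Rlt_le_trans; [exact Hy | apply Rmin_l].
Qed.

Definition slope (g : R -> R) (x y : R) : R := (g y - g x) / (y - x).

Lemma is_derive_slope (g : R -> R) (x l : R) :
  is_derive g x l <-> filterlim (slope g x) (locally' x) (locally l).
Proof.
  rewrite is_derive_Reals. split.
  - intros H P [eps HP].
    destruct (H eps (cond_pos eps)) as [del Hdel].
    exists del. intros y Hy Hyx. apply HP.
    change R in y. change (Rabs (y - x) < del) in Hy.
    assert (Hh : y - x <> 0) by (intro; apply Hyx; lra).
    specialize (Hdel (y - x) Hh Hy).
    replace (x + (y - x)) with y in Hdel by ring. exact Hdel.
  - intros H eps Heps.
    destruct (H _ (locally_ball l (mkposreal eps Heps))) as [del Hdel].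
    exists del. intros h Hh0 Hh.
    assert (Hy : ball x del (x + h)).
    { change (Rabs (x + h - x) < del). replace (x + h - x) with h by ring. exact Hh. }
    assert (Hyx : x + h <> x) by (intro; apply Hh0; lra).
    specialize (Hdel (x + h) Hy Hyx).
    unfold slope in Hdel. replace (x + h - x) with h in Hdel by ring. exact Hdel.
Qed.

Lemma slope_limit_nonpos {F : (R -> Prop) -> Prop} {FF : ProperFilter F}
  (g : R -> R) (x l : R) :
  filterlim (slope g x) F (locally l) -> F (fun y => x < y /\ g y <= g x) -> l <= 0.
Proof.
  intros Hl Hmax.
  apply (filterlim_le (F := F) (slope g x) (fun _ => 0) l 0); [| exact Hl | apply filterlim_const].
  revert Hmax. apply filter_imp. intros y [Hxy Hy]. unfold slope, Rdiv.
  assert (0 < / (y - x)) by (apply Rinv_0_lt_compat; lra). nra.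
Qed.

Lemma slope_limit_nonneg {F : (R -> Prop) -> Prop} {FF : ProperFilter F}
  (g : R -> R) (x l : R) :
  filterlim (slope g x) F (locally l) -> F (fun y => y < x /\ g y <= g x) -> 0 <= l.
Proof.
  intros Hl Hmax.
  apply (filterlim_le (F := F) (fun _ => 0) (slope g x) 0 l); [| apply filterlim_const | exact Hl].
  revert Hmax. apply filter_imp. intros y [Hxy Hy]. unfold slope, Rdiv.
  assert (/ (y - x) < 0) by (apply Rinv_lt_0_compat; lra). nra.
Qed.

Lemma is_derive_left_max (g : R -> R) (x l : R) :
  is_derive g x l -> (exists del, 0 < del /\ forall y, x - del < y < x -> g y <= g x) ->
  0 <= l.
Proof.
  intros Hd [del [Hdel Hmax]].
  apply (slope_limit_nonneg (F := at_left x) g x l).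
  - apply (filterlim_filter_le_1 _ (within_locally_le x _ _ (ex_intro _ (mkposreal 1 Rlt_0_1)
      (fun y _ Hy => Rlt_not_eq y x Hy)))).
    apply is_derive_slope, Hd.
  - exists (mkposreal del Hdel). intros y Hy Hyx. change (Rabs (y - x) < del) in Hy.
    split; [exact Hyx|]. apply Hmax. apply Rabs_def2 in Hy. lra.
Qed.

Lemma interior_max_second_derivative (g g' : R -> R) (a b x g'' : R) :
  a < x < b -> (forall y, a < y < b -> is_derive g y (g' y)) -> is_derive g' x g'' ->
  (forall y, a < y < b -> g y <= g x) -> g'' <= 0.
Proof.
  intros Hx Hg Hg' Hmax.
  destruct (Rle_or_lt g'' 0) as [|Hpos]; [assumption | exfalso].
  assert (Hg'x : 0 <= g' x).
  { apply (is_derive_left_max g x); [apply Hg; lra|].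
    exists (x - a). split; [lra|]. intros y Hy. apply Hmax. lra. }
  assert (Hslope : locally' x (fun y => 0 < slope g' x y)).
  { apply (proj1 (is_derive_slope g' x g'') Hg' (fun q => 0 < q)).
    apply (open_gt 0 g'' Hpos). }
  destruct Hslope as [del Hdel].
  (* g' > g' x >= 0 on (x, x + del), so by the mean value theorem g y > g x *)
  set (y := x + Rmin del (b - x) / 2).
  assert (0 < Rmin del (b - x)) by (apply Rmin_pos; [apply cond_pos | lra]).
  assert (Rmin del (b - x) <= del) by apply Rmin_l.
  assert (Rmin del (b - x) <= b - x) by apply Rmin_r.
  assert (Hxy : x < y) by (unfold y; lra).
  destruct (MVT_cor2 g g' x y Hxy) as [c [Heq Hc]].
  { intros c Hc. apply is_derive_Reals, Hg. unfold y in *; lra. }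
  assert (Hc' : 0 < g' c).
  { assert (Hcx : c <> x) by lra.
    assert (Hball : ball x del c).
    { change (Rabs (c - x) < del). rewrite Rabs_right by lra. unfold y in *; lra. }
    specialize (Hdel c Hball Hcx). unfold slope, Rdiv in Hdel.
    assert (0 < / (c - x)) by (apply Rinv_0_lt_compat; lra). nra. }
  specialize (Hmax y ltac:(unfold y in *; lra)).
  nra.
Qed.

Lemma pdx_in01_is_derive (v : R -> R -> R) (t x l : R) :
  0 < x < 1 -> pdx_in01 v t x l -> is_derive (v t) x l.
Proof.
  intros Hx Hl. apply is_derive_slope.
  refine (filterlim_filter_le_1 _ (within_locally_le x _ _ _) Hl).
  exists (mkposreal _ (Rmin_pos _ _ (proj1 Hx) (proj2 (Rlt_0_minus _ _) (proj2 Hx)))).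
  intros y Hy Hyx. simpl in Hy. apply Rabs_def2 in Hy.
  pose proof (Rmin_l x (1 - x)). pose proof (Rmin_r x (1 - x)).
  split; [lra | exact Hyx].
Qed.

Lemma pdx_in01_max_at_0 (v : R -> R -> R) (t l : R) :
  pdx_in01 v t 0 l -> (forall y, 0 <= y <= 1 -> v t y <= v t 0) -> l <= 0.
Proof.
  intros Hl Hmax.
  apply (slope_limit_nonpos (F := at_right 0) (v t) 0 l).
  - refine (filterlim_filter_le_1 _ (within_locally_le 0 _ _ _) Hl).
    exists (mkposreal 1 Rlt_0_1). intros y Hy Hy0. simpl in Hy. apply Rabs_def2 in Hy.
    split; lra.
  - exists (mkposreal 1 Rlt_0_1). intros y Hy Hy0. change (Rabs (y - 0) < 1) in Hy.
    apply Rabs_def2 in Hy. split; [exact Hy0 | apply Hmax; lra].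
Qed.

Lemma pdx_in01_max_at_1 (v : R -> R -> R) (t l : R) :
  pdx_in01 v t 1 l -> (forall y, 0 <= y <= 1 -> v t y <= v t 1) -> 0 <= l.
Proof.
  intros Hl Hmax.
  apply (slope_limit_nonneg (F := at_left 1) (v t) 1 l).
  - refine (filterlim_filter_le_1 _ (within_locally_le 1 _ _ _) Hl).
    exists (mkposreal 1 Rlt_0_1). intros y Hy Hy1. simpl in Hy. apply Rabs_def2 in Hy.
    split; lra.
  - exists (mkposreal 1 Rlt_0_1). intros y Hy Hy1. change (Rabs (y - 1) < 1) in Hy.
    apply Rabs_def2 in Hy. split; [exact Hy1 | apply Hmax; lra].
Qed.

Definition strip_continuous (W : R -> R -> R) : Prop :=
  forall t x, 0 <= t -> 0 <= x <= 1 -> forall eps, 0 < eps ->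
  exists del, 0 < del /\ forall s y, 0 <= s -> 0 <= y <= 1 ->
    Rabs (s - t) < del -> Rabs (y - x) < del -> Rabs (W s y - W t x) < eps.

Lemma cont_on2_strip_continuous (W : R -> R -> R) :
  cont_on2 Q_closed W -> strip_continuous W.
Proof.
  intros HW t x Ht Hx eps Heps.
  destruct (HW t x (conj Ht Hx) _ (locally_ball (W t x) (mkposreal eps Heps))) as [del Hdel].
  exists del. split; [apply cond_pos|].
  intros s y Hs Hy Hst Hyx. exact (Hdel (s, y) (conj Hst Hyx) (conj Hs Hy)).
Qed.

Lemma strip_continuous_minus (W1 W2 : R -> R -> R) :
  strip_continuous W1 -> strip_continuous W2 ->
  strip_continuous (fun s y => W1 s y - W2 s y).
Proof.
  intros H1 H2 t x Ht Hx eps Heps.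
  destruct (H1 t x Ht Hx (eps / 2)) as [d1 [Hd1 Hc1]]; [lra|].
  destruct (H2 t x Ht Hx (eps / 2)) as [d2 [Hd2 Hc2]]; [lra|].
  exists (Rmin d1 d2). split; [now apply Rmin_pos|].
  intros s y Hs Hy Hst Hyx.
  pose proof (Rmin_l d1 d2). pose proof (Rmin_r d1 d2).
  specialize (Hc1 s y Hs Hy ltac:(lra) ltac:(lra)).
  specialize (Hc2 s y Hs Hy ltac:(lra) ltac:(lra)).
  apply Rabs_def2 in Hc1. apply Rabs_def2 in Hc2. apply Rabs_def1; lra.
Qed.

Lemma strip_continuous_time (g : R -> R) :
  (forall s, continuous g s) -> strip_continuous (fun s _ => g s).
Proof.
  intros Hg t x _ _ eps Heps.
  destruct (Hg t _ (locally_ball (g t) (mkposreal eps Heps))) as [del Hdel].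
  exists del. split; [apply cond_pos|].
  intros s y _ _ Hst _. exact (Hdel s Hst).
Qed.

Lemma strip_negative_near (W : R -> R -> R) (t0 : R) :
  strip_continuous W -> 0 <= t0 -> (forall x, 0 <= x <= 1 -> W t0 x < 0) ->
  exists del, 0 < del /\
    forall s x, 0 <= s -> Rabs (s - t0) < del -> 0 <= x <= 1 -> W s x < 0.
Proof.
  intros HW Ht0 Hneg.
  assert (Hloc : forall x, {del : posreal | 0 <= x <= 1 -> forall s y, 0 <= s -> 0 <= y <= 1 ->
     Rabs (s - t0) < del -> Rabs (y - x) < del -> W s y < 0}).
  { intro x. apply constructive_indefinite_description.
    destruct (Rle_dec 0 x) as [Hx0|]; [destruct (Rle_dec x 1) as [Hx1|]|];
      try (exists (mkposreal 1 Rlt_0_1); intros []; contradiction).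
    destruct (HW t0 x Ht0 (conj Hx0 Hx1) (- W t0 x)) as [del [Hdel Hc]].
    { specialize (Hneg x (conj Hx0 Hx1)). lra. }
    exists (mkposreal del Hdel). intros _ s y Hs Hy Hst Hyx.
    specialize (Hc s y Hs Hy Hst Hyx). apply Rabs_def2 in Hc. lra. }
  (* a Lebesgue number for the cover of [0,1] by the balls above *)
  destruct (compactness_value_1d 0 1 (fun x => proj1_sig (Hloc x))) as [del Hdel].
  exists del. split; [apply cond_pos|].
  intros s x Hs Hst Hx.
  destruct (Rlt_or_le (W s x) 0) as [|Hge]; [assumption | exfalso].
  apply (Hdel x Hx). intros [x' [Hx' [Hxx' Hle]]].
  destruct (Hloc x') as [del' Hdel']; simpl in *.
  specialize (Hdel' Hx' s x Hs Hx ltac:(lra) Hxx'). lra.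
Qed.

Lemma strip_nonpos_after_negative_past (W : R -> R -> R) (ts : R) :
  strip_continuous W -> 0 < ts -> (forall s y, 0 <= s < ts -> 0 <= y <= 1 -> W s y < 0) ->
  forall y, 0 <= y <= 1 -> W ts y <= 0.
Proof.
  intros HW Hts Hbefore y Hy.
  destruct (Rle_or_lt (W ts y) 0) as [|Hpos]; [assumption | exfalso].
  destruct (HW ts y (Rlt_le _ _ Hts) Hy (W ts y) Hpos) as [del [Hdel Hc]].
  set (s := Rmax 0 (ts - del / 2)).
  assert (Hs : 0 <= s < ts /\ ts - del / 2 <= s) by (unfold s, Rmax; destruct Rle_dec; lra).
  specialize (Hc s y ltac:(lra) Hy ltac:(rewrite Rabs_left; lra)
    ltac:(rewrite Rminus_diag, Rabs_R0; lra)).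
  apply Rabs_def2 in Hc. specialize (Hbefore s y ltac:(lra) Hy). lra.
Qed.

Lemma first_crossing (W : R -> R -> R) (t0 x0 : R) :
  strip_continuous W -> (forall x, 0 <= x <= 1 -> W 0 x < 0) ->
  0 <= t0 -> 0 <= x0 <= 1 -> 0 <= W t0 x0 ->
  exists ts x1, 0 < ts <= t0 /\ 0 <= x1 <= 1 /\ W ts x1 = 0 /\
    (forall y, 0 <= y <= 1 -> W ts y <= 0) /\
    (forall s y, 0 <= s < ts -> 0 <= y <= 1 -> W s y < 0).
Proof.
  intros HW H0 Ht0 Hx0 HWt0.
  set (E := fun s => 0 <= s /\ forall tau y, 0 <= tau < s -> 0 <= y <= 1 -> W tau y < 0).
  assert (Ht0ub : is_upper_bound E t0).
  { intros s [Hs Hneg]. destruct (Rle_or_lt s t0) as [|Hlt]; [assumption|].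
    specialize (Hneg t0 x0 (conj Ht0 Hlt) Hx0). lra. }
  destruct (completeness E) as [ts [Hub Hlub]].
  { exists t0. exact Ht0ub. }
  { exists 0. split; [lra|]. intros tau y Htau. lra. }
  assert (Hts0 : 0 <= ts) by (apply Hub; split; [lra | intros tau y Htau; lra]).
  assert (Hbefore : forall s y, 0 <= s < ts -> 0 <= y <= 1 -> W s y < 0).
  { intros s y Hs Hy. destruct (Rlt_or_le (W s y) 0) as [|Hge]; [assumption | exfalso].
    assert (ts <= s); [|lra]. apply Hlub. intros s' [_ Hs'].
    destruct (Rle_or_lt s' s) as [|Hlt]; [assumption|].
    specialize (Hs' s y (conj (proj1 Hs) Hlt) Hy). lra. }
  assert (Hcross : exists x1, 0 <= x1 <= 1 /\ 0 <= W ts x1).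
  { apply NNPP. intro Hno.
    assert (Hneg : forall y, 0 <= y <= 1 -> W ts y < 0).
    { intros y Hy. destruct (Rlt_or_le (W ts y) 0) as [|Hge]; [assumption|].
      exfalso. apply Hno. exists y. split; assumption. }
    destruct (strip_negative_near W ts HW Hts0 Hneg) as [del [Hdel Hnear]].
    assert (Hext : E (ts + del / 2)).
    { split; [lra|]. intros tau y Htau Hy.
      destruct (Rlt_or_le tau ts); [apply Hbefore; lra|].
      apply Hnear; [lra | rewrite Rabs_right; lra | assumption]. }
    specialize (Hub _ Hext). lra. }
  destruct Hcross as [x1 [Hx1 HWx1]].
  assert (Htspos : 0 < ts).
  { destruct Hts0 as [|Hts0]; [assumption|]. subst ts. specialize (H0 x1 Hx1). lra. }
  pose proof (strip_nonpos_after_negative_past W ts HW Htspos Hbefore) as Hle.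
  exists ts, x1. split; [split; [assumption | apply Hlub, Ht0ub]|].
  split; [assumption|]. split; [apply Rle_antisym; auto|].
  split; assumption.
Qed.

Definition heat_regular (v vt vx vxx : R -> R -> R) : Prop :=
  strip_continuous v /\
  (forall t x, Q_open t x ->
     is_derive (fun s => v s x) t (vt t x) /\ is_derive (fun y => vx t y) x (vxx t x)) /\
  (forall t x, Q_side t x -> pdx_in01 v t x (vx t x)).

Lemma regular_n_heat_regular (v : R -> R -> R) (rho : R -> R) (vt vx vxx : R -> R -> R) :
  regular_n v rho vt vx vxx -> heat_regular v vt vx vxx.
Proof.
  intros [_ [Hc [Hder [Hpdx _]]]].
  split; [apply cont_on2_strip_continuous, Hc | split; assumption].
Qed.

Lemma heat_regular_minus (v1 vt1 vx1 vxx1 v2 vt2 vx2 vxx2 : R -> R -> R) :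
  heat_regular v1 vt1 vx1 vxx1 -> heat_regular v2 vt2 vx2 vxx2 ->
  heat_regular (fun t x => v1 t x - v2 t x) (fun t x => vt1 t x - vt2 t x)
    (fun t x => vx1 t x - vx2 t x) (fun t x => vxx1 t x - vxx2 t x).
Proof.
  intros [Hc1 [Hder1 Hpdx1]] [Hc2 [Hder2 Hpdx2]].
  split; [now apply strip_continuous_minus|]. split.
  - intros t x Htx.
    destruct (Hder1 t x Htx) as [Ht1 Hx1]. destruct (Hder2 t x Htx) as [Ht2 Hx2].
    split; [exact (is_derive_minus _ _ _ _ _ Ht1 Ht2) | exact (is_derive_minus _ _ _ _ _ Hx1 Hx2)].
  - intros t x Htx. unfold pdx_in01.
    eapply filterlim_ext; [| exact (filterlim_Rminus _ _ _ _ (Hpdx1 t x Htx) (Hpdx2 t x Htx))].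
    intros y. simpl. unfold Rdiv. ring.
Qed.

Lemma heat_maximum_principle (d alpha : R) (w wt wx wxx : R -> R -> R) :
  0 <= d -> 0 < alpha -> heat_regular w wt wx wxx ->
  (forall t x, 0 < t -> 0 < x < 1 -> wt t x <= d * wxx t x) ->
  (forall t, 0 < t -> - d * wx t 0 + alpha * w t 0 <= 0) ->
  (forall t, 0 < t -> d * wx t 1 + alpha * w t 1 <= 0) ->
  (forall x, 0 <= x <= 1 -> w 0 x <= 0) ->
  forall t x, 0 <= t -> 0 <= x <= 1 -> w t x <= 0.
Proof.
  intros Hd Ha [Hc [Hder Hpdx]] Hheat Hb0 Hb1 Hinit t x Ht Hx.
  destruct (Rle_or_lt (w t x) 0) as [|Hpos]; [assumption | exfalso].
  set (eps := w t x / (2 * (1 + t))).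
  assert (Heps : 0 < eps) by (apply Rdiv_lt_0_compat; lra).
  destruct (first_crossing (fun s y => w s y - eps * (1 + s)) t x)
    as [ts [x1 [Hts [Hx1 [Htouch [Hbelow Hbefore]]]]]]; try assumption.
  - apply strip_continuous_minus; [exact Hc|].
    apply (strip_continuous_time (fun s => eps * (1 + s))).
    intros s. apply (ex_derive_continuous (fun s => eps * (1 + s))). auto_derive. trivial.
  - intros y Hy. specialize (Hinit y Hy). lra.
  - unfold eps. replace (w t x / (2 * (1 + t)) * (1 + t)) with (w t x / 2) by (field; lra). lra.
  - assert (Hmax : forall y, 0 <= y <= 1 -> w ts y <= w ts x1).
    { intros y Hy. specialize (Hbelow y Hy). lra. }
    assert (Hbarrier : 0 < eps * (1 + ts)) by (apply Rmult_lt_0_compat; lra).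
    assert (Hw1 : 0 < w ts x1) by lra.
    destruct (Req_dec x1 0) as [->|Hx10]; [|destruct (Req_dec x1 1) as [->|Hx11]].
    + assert (Hslope := pdx_in01_max_at_0 w ts _ (Hpdx ts 0 ltac:(split; lra)) Hmax).
      specialize (Hb0 ts ltac:(lra)). nra.
    + assert (Hslope := pdx_in01_max_at_1 w ts _ (Hpdx ts 1 ltac:(split; lra)) Hmax).
      specialize (Hb1 ts ltac:(lra)). nra.
    + assert (Hx1' : 0 < x1 < 1) by lra.
      destruct (Hder ts x1 ltac:(split; lra)) as [Hwt Hwxx].
      assert (Htime : 0 <= wt ts x1 - eps * 1).
      { apply (is_derive_left_max (fun s => w s x1 - eps * (1 + s)) ts).
        - apply (is_derive_minus (fun s => w s x1) (fun s => eps * (1 + s))); [exact Hwt|].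
          auto_derive; [trivial | ring].
        - exists ts. split; [lra|]. intros s Hs. specialize (Hbefore s x1 ltac:(lra) Hx1). lra. }
      assert (Hspace : wxx ts x1 <= 0).
      { apply (interior_max_second_derivative (w ts) (wx ts) 0 1 x1); [exact Hx1' | | exact Hwxx |].
        - intros y Hy. apply pdx_in01_is_derive; [exact Hy|]. apply Hpdx. split; lra.
        - intros y Hy. apply Hmax. lra. }
      specialize (Hheat ts x1 ltac:(lra) Hx1'). nra.
Qed.

Definition locally_lipschitz (h : R -> R) : Prop :=
  forall a b, exists L, forall x y, a <= x <= b -> a <= y <= b ->
    Rabs (h x - h y) <= L * Rabs (x - y).

Lemma locally_lipschitz_sub_linear (h : R -> R) (c : R) :
  locally_lipschitz h -> locally_lipschitz (fun r => h r - c * r).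
Proof.
  intros Hh a b. destruct (Hh a b) as [L HL]. exists (L + Rabs c).
  intros x y Hx Hy. specialize (HL x y Hx Hy).
  replace (h x - c * x - (h y - c * y)) with ((h x - h y) + - (c * (x - y))) by ring.
  eapply Rle_trans; [apply Rabs_triang|].
  rewrite Rabs_Ropp, Rabs_mult. lra.
Qed.

Lemma locally_lipschitz_along (h G1 G2 : R -> R) (t : R) :
  locally_lipschitz h -> (forall s, continuous G1 s) -> (forall s, continuous G2 s) ->
  exists L, forall s, 0 <= s <= t -> Rabs (h (G1 s) - h (G2 s)) <= L * Rabs (G1 s - G2 s).
Proof.
  intros Hh HG1 HG2.
  destruct (bounded_continuity G1 0 t (fun s _ => HG1 s)) as [M1 HM1].
  destruct (bounded_continuity G2 0 t (fun s _ => HG2 s)) as [M2 HM2].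
  destruct (Hh (- Rmax M1 M2) (Rmax M1 M2)) as [L HL].
  exists L. intros s Hs. apply HL.
  - specialize (HM1 s Hs). pose proof (Rmax_l M1 M2). apply Rabs_def2 in HM1. lra.
  - specialize (HM2 s Hs). pose proof (Rmax_r M1 M2). apply Rabs_def2 in HM2. lra.
Qed.

Lemma ode_comparison (h : R -> R) (ru rs Gu Gs : R -> R) :
  locally_lipschitz h ->
  (forall t, ex_derive Gu t) -> (forall t, ex_derive Gs t) ->
  (forall t, 0 <= t -> Gu t = ru t) -> (forall t, 0 <= t -> Gs t = rs t) ->
  (forall t, 0 < t -> Derive ru t - h (ru t) <= Derive rs t - h (rs t)) ->
  ru 0 <= rs 0 -> forall t, 0 < t -> ru t <= rs t.
Proof.
  intros Hh Hdu Hds Eu Es Hdefect H0 t Ht.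
  destruct (Rle_or_lt (ru t) (rs t)) as [|Hgt]; [assumption | exfalso].
  assert (Hcont : forall G : R -> R, (forall s : R, ex_derive G s) -> forall s, continuous G s)
    by (intros G HG s; exact (ex_derive_continuous G s (HG s))).
  destruct (locally_lipschitz_along h Gu Gs t Hh (Hcont Gu Hdu) (Hcont Gs Hds)) as [L HL].
  set (K := Rabs L + 1).
  set (eps := (ru t - rs t) / (2 * exp (K * t))).
  assert (Heps : 0 < eps) by (apply Rdiv_lt_0_compat; [lra | pose proof (exp_pos (K * t)); lra]).
  set (g := fun s => Gu s - Gs s - eps * exp (K * s)).
  destruct (first_crossing (fun s _ => g s) t 0) as [ts [_ [Hts [_ [Htouch [_ Hbefore]]]]]];
    try lra.
  - apply strip_continuous_time. intros s. apply Hcont. intros s'. unfold g. auto_derive. auto.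
  - intros _ _. unfold g. rewrite Rmult_0_r, exp_0, Eu, Es by lra. lra.
  - unfold g, eps. rewrite Eu, Es by lra.
    replace ((ru t - rs t) / (2 * exp (K * t)) * exp (K * t)) with ((ru t - rs t) / 2)
      by (field; pose proof (exp_pos (K * t)); lra). lra.
  - set (E := eps * exp (K * ts)).
    assert (HE : 0 < E) by (apply Rmult_lt_0_compat; [lra | apply exp_pos]).
    assert (Hgap : Gu ts - Gs ts = E) by (unfold g in Htouch; unfold E; lra).
    assert (Hslope : 0 <= Derive Gu ts - Derive Gs ts - K * E).
    { apply (is_derive_left_max g ts).
      - unfold g, E. auto_derive; [auto|].
        change (fun x => Gu x) with Gu. change (fun x => Gs x) with Gs. ring.
      - exists ts. split; [lra|]. intros s Hs.
        specialize (Hbefore s 0 ltac:(lra) ltac:(lra)). lra. }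
    assert (Hloc : forall G r, (forall s, 0 <= s -> G s = r s) -> Derive G ts = Derive r ts).
    { intros G r Er. apply Derive_ext_loc. exists (mkposreal ts (proj1 Hts)).
      intros s Hs. apply Er. change (Rabs (s - ts) < ts) in Hs. apply Rabs_def2 in Hs. lra. }
    specialize (HL ts ltac:(lra)). rewrite Hgap, (Rabs_right E) in HL by lra.
    specialize (Hdefect ts (proj1 Hts)).
    rewrite <- (Hloc Gu ru Eu), <- (Hloc Gs rs Es), <- !Eu, <- !Es in Hdefect by lra.
    pose proof (Rle_abs (h (Gu ts) - h (Gs ts))).
    assert (L * E <= Rabs L * E) by (apply Rmult_le_compat_r; [lra | apply Rle_abs]).
    unfold K in Hslope. lra.
Qed.

Section Scheme.

Variables (d alpha beta : R) (f : R -> R) (vs : vseq) (rs : rseq) (vu : vseq) (ru : rseq).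
Hypotheses (Halpha : 0 < alpha) (Hbeta : 0 < beta) (Hd : 0 < d) (Hf : locally_lipschitz f).
Hypotheses (Hsup : supersolution d alpha beta f vs rs) (Hsub : subsolution d alpha beta f vu ru).
Hypothesis Hv_level0 :
  forall j t x, 0 <= t -> 0 <= x <= 1 -> vu 0%nat j t x <= vs 0%nat j t x.
Hypothesis Hv_init :
  forall n, (1 <= n)%nat -> forall j x, 0 <= x <= 1 -> vu n j 0 x <= vs n j 0 x.
Hypothesis Hrho_init : forall n, (1 <= n)%nat -> forall j, ru n j 0 <= rs n j 0.

Lemma rho_succ_level_le (m : nat) :
  (forall j t x, 0 < t -> 0 <= x <= 1 -> vu m j t x <= vs m j t x) ->
  forall j t, 0 < t -> ru (S m) j t <= rs (S m) j t.
Proof.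
  intros Hv j.
  destruct (proj2 Hsup (S m) ltac:(lia) j) as [vts [vxs [vxxs [[[Gs [HGs EGs]] _] Hs]]]].
  destruct (proj2 Hsub (S m) ltac:(lia) j) as [vtu [vxu [vxxu [[[Gu [HGu EGu]] _] Hu]]]].
  replace (S m - 1)%nat with m in Hs, Hu by lia.
  apply (ode_comparison (fun r => f r - 2 * beta * r) _ _ Gu Gs
    (locally_lipschitz_sub_linear f _ Hf) (proj1 HGu) (proj1 HGs) EGu EGs).
  - intros t Ht. destruct (Hu t Ht) as [_ [Hru _]]. destruct (Hs t Ht) as [_ [Hrs _]].
    pose proof (Hv j t 0 Ht ltac:(lra)). pose proof (Hv (j - 1)%Z t 1 Ht ltac:(lra)).
    nra.
  - apply Hrho_init. lia.
Qed.

Lemma v_level_le_of_rho_le (n : nat) : (1 <= n)%nat ->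
  (forall j t, 0 < t -> ru n j t <= rs n j t) ->
  forall j t x, 0 <= t -> 0 <= x <= 1 -> vu n j t x <= vs n j t x.
Proof.
  intros Hn Hrho j t x Ht Hx.
  destruct (proj2 Hsup n Hn j) as [vts [vxs [vxxs [Hregs Hs]]]].
  destruct (proj2 Hsub n Hn j) as [vtu [vxu [vxxu [Hregu Hu]]]].
  apply Rminus_le.
  refine (heat_maximum_principle d alpha _ _ _ _ (Rlt_le _ _ Hd) Halpha
    (heat_regular_minus _ _ _ _ _ _ _ _
      (regular_n_heat_regular _ _ _ _ _ Hregu) (regular_n_heat_regular _ _ _ _ _ Hregs))
    _ _ _ _ t x Ht Hx).
  - intros t' x' Ht' Hx'.
    pose proof (proj1 (Hu t' Ht') x' Hx'). pose proof (proj1 (Hs t' Ht') x' Hx'). lra.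
  - intros t' Ht'. destruct (Hu t' Ht') as [_ [_ [Hu0 _]]]. destruct (Hs t' Ht') as [_ [_ [Hs0 _]]].
    pose proof (Hrho j t' Ht'). nra.
  - intros t' Ht'. destruct (Hu t' Ht') as [_ [_ [_ Hu1]]]. destruct (Hs t' Ht') as [_ [_ [_ Hs1]]].
    pose proof (Hrho (j + 1)%Z t' Ht'). nra.
  - intros x' Hx'. pose proof (Hv_init n Hn j x' Hx'). lra.
Qed.

Lemma v_level_le (m : nat) :
  forall j t x, 0 < t -> 0 <= x <= 1 -> vu m j t x <= vs m j t x.
Proof.
  induction m as [|m IHm]; intros j t x Ht Hx.
  - apply Hv_level0; lra.
  - apply v_level_le_of_rho_le; [lia | apply rho_succ_level_le, IHm | lra | exact Hx].
Qed.

End Scheme.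

Theorem proposition2p3 :
  forall (d alpha beta : R) (f : R -> R),
    0 < alpha -> 0 < beta -> 0 < d -> KPP_f f ->
  forall (vs : vseq) (rs : rseq) (vu : vseq) (ru : rseq),
    supersolution d alpha beta f vs rs ->
    subsolution d alpha beta f vu ru ->
    (forall (j : Z) t x, 0 <= t -> 0 <= x <= 1 -> vu 0%nat j t x <= vs 0%nat j t x) ->
    (forall (j : Z) t, 0 <= t -> ru 0%nat j t <= rs 0%nat j t) ->
    (forall n : nat, (1 <= n)%nat -> forall (j : Z) x, 0 <= x <= 1 ->
        vu n j 0 x <= vs n j 0 x) ->
    (forall n : nat, (1 <= n)%nat -> forall j : Z, ru n j 0 <= rs n j 0) ->
  forall n : nat, (1 <= n)%nat -> forall (j : Z) t, 0 < t ->
    (forall x, 0 <= x <= 1 -> vu n j t x <= vs n j t x) /\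
    ru n j t <= rs n j t.
Proof.
  (* the densities of level 0 never enter the scheme *)
  intros d alpha beta f Halpha Hbeta Hd Hf vs rs vu ru Hsup Hsub Hv0 _ Hvn Hrn n Hn j t Ht.
  destruct Hf as [_ [_ [_ [Hlip _]]]].
  pose proof (v_level_le d alpha beta f vs rs vu ru Halpha Hbeta Hd Hlip Hsup Hsub
    Hv0 Hvn Hrn) as Hv.
  destruct n as [|m]; [lia|].
  split.
  - intros x Hx. exact (Hv (S m) j t x Ht Hx).
  - exact (rho_succ_level_le d alpha beta f vs rs vu ru Halpha Hlip Hsup Hsub Hrn m (Hv m) j t Ht).
Qed.
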